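(* Let $G=(V,E)$ be a graph with a partition of its vertex set into sets $V_1,\dots,V_t$ ($t$ a positive integer), each $V_i$ being a set of pairwise true twins. Let $m_i=|V_i|$ for $1\le i\le t$. Let $\Gamma$ be a finite Abelian group of order $m$ with $\sum_{i=1}^t m_i=m-1$. If $\Gamma^*$ can be partitioned into pairwise disjoint sets $S_1,\dots,S_t$ with $|S_i|=m_i$ and $\sum_{s\in S_i}s=0$ for every $i$, then $G$ has a $\Gamma^*$-distance anti-magic labeling.
   Context: $\Gamma^*=\Gamma\setminus\{0\}$. In a graph $G=(V,E)$, a set $M\subseteq V$ is a module if $N(x)\setminus M=N(y)\setminus M$ for all $x,y\in M$. Two vertices $x,y$ are twins if $\{x,y\}$ is a module; they are false twins if moreover $\{x,y\}\notin E$ and true twins if $\{x,y\}\in E$ (every vertex is considered a false and true twin of itself). A $\Gamma^*$-distance anti-magic labeling of $G$ (with $|V|=|\Gamma|-1$) is a bijection $\ell\colon V\to\Gamma^*$ such that the weights $w(v)=\sum_{u\in N(v)}\ell(u)$, $v\in V$, are pairwise distinct. *)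

From HB Require Import structures.
From mathcomp Require Import all_boot all_order all_algebra.
Set Implicit Arguments. Unset Strict Implicit. Unset Printing Implicit Defensive.
Import GRing.Theory.
Local Open Scope ring_scope.

(* A (simple) graph is a symmetric irreflexive relation [adj] on a finType V. *)

Definition nbhd (V : finType) (adj : rel V) (x : V) : {set V} :=
  [set y | adj x y].

Definition is_module (V : finType) (adj : rel V) (M : {set V}) : Prop :=
  forall x y, x \in M -> y \in M -> nbhd adj x :\: M = nbhd adj y :\: M.

Definition true_twins (V : finType) (adj : rel V) (x y : V) : Prop :=
  x = y \/ (is_module adj [set x; y] /\ adj x y).

Definition weight (V : finType) (adj : rel V) (G : zmodType) (l : V -> G) (v : V) : G :=
  \sum_(u | adj v u) l u.

Definition dist_antimagic_labeling (V : finType) (adj : rel V)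
    (G : finZmodType) (l : V -> G) : Prop :=
  [/\ injective l,
      (forall v, l v != 0),
      (forall g : G, g != 0 -> exists v, l v = g)
    & injective (weight adj l)].

(* Label each twin class V_i bijectively by S_i.  A closed neighbourhood N[v]
   is a union of twin classes (true twins have the same closed neighbourhood),
   so its labels sum to 0 and the weight of v is -l(v); distinct labels then
   give distinct weights. *)

From HB Require Import structures.
From mathcomp Require Import all_boot all_order all_algebra.
Import GRing.Theory.
Local Open Scope ring_scope.

Set Implicit Arguments.
Unset Strict Implicit.
Unset Printing Implicit Defensive.

Section Transport.

Variables (T U : finType) (u0 : U) (A : {set T}) (B : {set U}).
Hypothesis card_AB : #|A| = #|B|.

Definition transport (x : T) : U := nth u0 (enum B) (index x (enum A)).

Lemma transport_index_lt x : x \in A -> (index x (enum A) < size (enum B))%N.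
Proof. by move=> Ax; rewrite -cardE -card_AB cardE index_mem mem_enum. Qed.

Lemma transport_inj : {in A &, injective transport}.
Proof.
move=> x y Ax Ay /eqP; rewrite /transport.
rewrite nth_uniq ?enum_uniq ?transport_index_lt // => /eqP.
by apply: (index_inj x); rewrite mem_enum.
Qed.

Lemma transport_imset : transport @: A = B.
Proof.
apply/eqP; rewrite eqEcard (card_in_imset transport_inj) card_AB leqnn andbT.
apply/subsetP => _ /imsetP [x Ax ->].
by rewrite -mem_enum mem_nth ?transport_index_lt.
Qed.

End Transport.

Section Blocks.

Variables (T I : finType) (i0 : I) (P : I -> {set T}).
Hypothesis P_disj : forall i j, i != j -> [disjoint P i & P j].
Hypothesis P_cover : \bigcup_i P i = [set: T].

Definition block (x : T) : I := odflt i0 [pick i | x \in P i].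

Lemma mem_block x : x \in P (block x).
Proof.
rewrite /block; case: pickP => [i //|notin].
have : x \in \bigcup_i P i by rewrite P_cover inE.
by case/bigcupP => i _; rewrite notin.
Qed.

Lemma blockE i x : x \in P i -> block x = i.
Proof.
move=> Pix; apply/eqP; apply: contraT => ne.
by rewrite (disjointFr (P_disj ne) (mem_block x)) in Pix.
Qed.

Lemma sum_blocks_eq0 (M : nmodType) (f : T -> M) (A : {set T}) :
    (forall i, \sum_(x in P i) f x = 0) ->
    (forall i, P i \subset A \/ [disjoint P i & A]) ->
  \sum_(x in A) f x = 0.
Proof.
move=> sum_P0 P_dichot; rewrite (partition_big block xpredT) //=.
apply: big1 => i _; case: (P_dichot i) => [sub_PA | dis_PA].
- rewrite -[RHS](sum_P0 i); apply: eq_bigl => x.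
  apply/andP/idP => [[_ /eqP <-] | Pix]; first exact: mem_block.
  by rewrite (subsetP sub_PA x Pix) (blockE Pix) eqxx.
- apply: big1 => x /andP [Ax /eqP bx].
  by move: (mem_block x); rewrite bx (disjointFl dis_PA).
Qed.

End Blocks.

Section ClosedNeighbourhood.

Variables (V : finType) (adj : rel V).
Hypotheses (adj_sym : symmetric adj) (adj_irr : irreflexive adj).

Definition cnbhd (v : V) : {set V} := v |: nbhd adj v.

Lemma in_cnbhd v u : (u \in cnbhd v) = (u == v) || adj v u.
Proof. by rewrite !inE. Qed.

Lemma true_twins_cnbhd v x y :
  true_twins adj x y -> x \in cnbhd v -> y \in cnbhd v.
Proof.
case=> [-> // | [mod_xy adj_xy]]; rewrite !in_cnbhd.
case/orP => [/eqP <- | adj_vx]; first by rewrite adj_xy orbT.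
have [// | ne_yv] := eqVneq y v; apply/orP; right.
have ne_xv : x != v by apply: contraTneq adj_vx => ->; rewrite adj_irr.
have : v \in nbhd adj x :\: [set x; y].
  by rewrite !inE adj_sym adj_vx andbT negb_or ![v == _]eq_sym ne_xv ne_yv.
by rewrite (mod_xy x y) ?inE ?eqxx ?orbT // => /andP [_]; rewrite adj_sym.
Qed.

Lemma twin_class_cnbhd (C : {set V}) v :
    (forall x y, x \in C -> y \in C -> true_twins adj x y) ->
  C \subset cnbhd v \/ [disjoint C & cnbhd v].
Proof.
move=> twinsC; have [sub | /subsetPn [y Cy Ny]] := boolP (C \subset cnbhd v).
  by left.
right; rewrite disjoint_subset; apply/subsetP => x Cx; rewrite inE.
by apply: contra Ny; apply: true_twins_cnbhd (twinsC x y Cx Cy).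
Qed.

Lemma weight_cnbhd (G : zmodType) (l : V -> G) v :
  weight adj l v = \sum_(u in cnbhd v) l u - l v.
Proof.
rewrite (bigD1 v) ?in_cnbhd ?eqxx //= addrAC subrr add0r.
apply: eq_bigl => u.
by rewrite in_cnbhd; case: eqVneq => [-> | _]; rewrite ?adj_irr ?andbT.
Qed.

End ClosedNeighbourhood.

Section BlockLabeling.

Variables (V I : finType) (i0 : I) (G : finZmodType).
Variables (P : I -> {set V}) (S : I -> {set G}).
Hypotheses (P_disj : forall i j, i != j -> [disjoint P i & P j])
           (P_cover : \bigcup_i P i = [set: V]).
Hypotheses (S_disj : forall i j, i != j -> [disjoint S i & S j])
           (S_cover : \bigcup_i S i = [set~ 0])
           (S_card : forall i, #|S i| = #|P i|).

Definition block_label (v : V) : G :=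
  transport 0 (P (block i0 P v)) (S (block i0 P v)) v.

Lemma block_label_imset i : block_label @: P i = S i.
Proof.
rewrite -(transport_imset 0 (esym (S_card i))); apply: eq_in_imset => v Piv.
by rewrite /block_label (blockE i0 P_disj P_cover Piv).
Qed.

Lemma block_label_in v : block_label v \in S (block i0 P v).
Proof.
by rewrite -block_label_imset imset_f // (mem_block i0 P_cover).
Qed.

Lemma block_label_inj : injective block_label.
Proof.
move=> u v luv.
have buv : block i0 P u = block i0 P v.
  apply/eqP; apply: contraT => ne; move: (block_label_in v).
  by rewrite -luv (disjointFr (S_disj ne) (block_label_in u)).
have Pu := mem_block i0 P_cover u; have Pv := mem_block i0 P_cover v.
move: luv; rewrite /block_label buv.
by apply: transport_inj; rewrite // -buv.
Qed.

Lemma block_label_neq0 v : block_label v != 0.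
Proof.
have : block_label v \in \bigcup_i S i.
  by apply/bigcupP; exists (block i0 P v); last exact: block_label_in.
by rewrite S_cover !inE.
Qed.

Lemma block_label_onto g : g != 0 -> exists v, block_label v = g.
Proof.
move=> g_neq0; have : g \in \bigcup_i S i by rewrite S_cover !inE.
by case/bigcupP => i _; rewrite -block_label_imset => /imsetP [v _ ->]; exists v.
Qed.

Lemma sum_block_label i :
  \sum_(s in S i) s = 0 -> \sum_(v in P i) block_label v = 0.
Proof.
move=> sum_S0; rewrite -[RHS]sum_S0 -block_label_imset big_imset //.
by move=> u v _ _; apply: block_label_inj.
Qed.

End BlockLabeling.

Theorem proposition4p8
  (V : finType) (adj : rel V)
  (adj_sym : symmetric adj) (adj_irr : irreflexive adj)
  (t : nat) (t_pos : (0 < t)%N)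
  (P : 'I_t -> {set V})
  (P_nonempty : forall i, P i != set0)
  (P_disj : forall i j, i != j -> [disjoint P i & P j])
  (P_cover : \bigcup_(i < t) P i = [set: V])
  (P_twins : forall i x y, x \in P i -> y \in P i -> true_twins adj x y)
  (G : finZmodType) (m : nat) (G_order : #|G| = m)
  (sum_m : (\sum_(i < t) #|P i|)%N = (m - 1)%N)
  (S : 'I_t -> {set G})
  (S_disj : forall i j, i != j -> [disjoint S i & S j])
  (S_cover : \bigcup_(i < t) S i = [set~ 0])
  (S_card : forall i, #|S i| = #|P i|)
  (S_sum : forall i, \sum_(s in S i) s = 0) :
  exists l : V -> G, dist_antimagic_labeling adj l.
Proof.
pose l := block_label (Ordinal t_pos) P S.
have l_inj : injective l := block_label_inj P_disj P_cover S_disj S_card.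
have sum_cnbhd v : \sum_(u in cnbhd adj v) l u = 0.
  apply: (sum_blocks_eq0 (Ordinal t_pos) P_disj P_cover).
    by move=> i; apply: sum_block_label.
  by move=> i; apply: (twin_class_cnbhd adj_sym adj_irr); apply: P_twins.
have weightE v : weight adj l v = - l v.
  by rewrite (weight_cnbhd adj_irr) sum_cnbhd sub0r.
exists l; split => //.
- by move=> v; apply: block_label_neq0.
- by move=> g; apply: block_label_onto.
- by move=> u v; rewrite !weightE => /oppr_inj; apply: l_inj.
Qed.
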